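(* Let $B \subset \mathbb{Z}$ be a Bohr-zero non-periodic set. Then the set $D := \{xy - z^2 \,:\, x,y,z \in B\}$ satisfies $D = \mathbb{Z}$.
   Context: $\mathbb{T}^n=\mathbb{R}^n/\mathbb{Z}^n$. A set $B\subset \mathbb{Z}$ is a non-periodic Bohr set if there exist $n\ge 1$, a homomorphism $\tau:\mathbb{Z}\to\mathbb{T}^n$ with $\overline{\tau(\mathbb{Z})}=\mathbb{T}^n$, and an open set $U\subset\mathbb{T}^n$ with $B=\tau^{-1}(U)$; it is Bohr-zero if moreover $U$ contains the zero element of $\mathbb{T}^n$. *)

(* The torus T^n = R^n / Z^n is modelled through
   its universal cover: a point of T^n is represented by a row vector of
   'rV[R]_n (R = Stdlib's reals, a realType), two vectors representing the
   same point iff their difference lies in Z^n. *)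
From HB Require Import structures.
From mathcomp Require Import all_boot all_order all_algebra.
From mathcomp Require Import all_classical all_reals all_analysis.
From mathcomp Require Import Rstruct Rstruct_topology.
Set Implicit Arguments. Unset Strict Implicit. Unset Printing Implicit Defensive.
Import Order.TTheory GRing.Theory Num.Theory.
Local Open Scope ring_scope.
Local Open Scope classical_set_scope.

Notation RR := Rdefinitions.R.

Definition lattice_vec (n : nat) (v : 'rV[RR]_n) : Prop :=
  forall i : 'I_n, v ord0 i \is a Num.int.

Definition torus_eq (n : nat) (u v : 'rV[RR]_n) : Prop := lattice_vec (u - v).

(* A subset of T^n, seen as a Z^n-invariant subset of R^n *)
Definition Zn_invariant (n : nat) (U : set 'rV[RR]_n) : Prop :=
  forall u v, torus_eq u v -> U u -> U v.

(* An open set of T^n = an open Z^n-invariant subset of R^n (quotient topology) *)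
Definition torus_open (n : nat) (U : set 'rV[RR]_n) : Prop :=
  Zn_invariant U /\ open U.

Definition torus_hom (n : nat) (tau : int -> 'rV[RR]_n) : Prop :=
  forall a b : int, torus_eq (tau (a + b)%R) (tau a + tau b).

(* the image of tau is dense in T^n: its full preimage tau(Z) + Z^n in R^n is dense *)
Definition torus_dense_image (n : nat) (tau : int -> 'rV[RR]_n) : Prop :=
  closure [set tau k + w | k in [set: int] & w in lattice_vec (n:=n)] = setT.

Definition bohr_zero_nonperiodic (B : set int) : Prop :=
  exists (n : nat) (tau : int -> 'rV[RR]_n) (U : set 'rV[RR]_n),
    (1 <= n)%N /\ torus_hom tau /\ torus_dense_image tau /\
    torus_open U /\ U 0 /\ B = [set k | U (tau k)].

(* Write al for the representative of tau(1) in R^n and ||x|| for the distance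
   of x to Z^n.  Since U is an open neighbourhood of 0, B contains a Bohr ball
   {k : ||k al|| <= r}, and density of tau(Z) says that the multiples of al are
   dense modulo Z^n.  The core is a quadratic Kronecker theorem: for all u, t
   there is m with m al ~ u and m^2 al ~ t.  Start from a with a al ~ u and
   append integers b_j, each paired with a large M_j such that M_j al ~ 0
   (Dirichlet) and 2 b_j M_j al ~ t - a^2 al - M_j^2 al (density); pigeonholing
   the partial sums of the uncontrolled terms b_j^2 al yields a block of steps
   where they cancel, and adding the last M_j then produces m.  Finally, with
   c >= 1 such that al / c is small, pick a with a al ~ -al/c and
   a^2 al ~ al/c^2 - d al: then y = a^2 + d, z = a + c y and x = 1 + 2 a c + c^2 y
   lie in the Bohr ball and x y - z^2 = y - a^2 = d. *)

From mathcomp Require Import all_boot all_order all_algebra.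
From mathcomp Require Import all_classical all_reals all_analysis.
From mathcomp Require Import Rstruct Rstruct_topology.
From mathcomp Require Import ring lra.
Import Order.TTheory GRing.Theory Num.Theory.
Set Implicit Arguments. Unset Strict Implicit. Unset Printing Implicit Defensive.
Local Open Scope ring_scope.
Local Open Scope classical_set_scope.

Section NearInt.
Variables (R : archiRealFieldType) (n : nat).
Implicit Types (x y : 'I_n -> R) (r s : R).

Definition near_int x r : Prop :=
  exists N : 'I_n -> int, forall i, `|x i - (N i)%:~R| <= r.

Lemma near_int_le x r s : near_int x r -> r <= s -> near_int x s.
Proof. by move=> [N HN] rs; exists N => i; apply: le_trans (HN i) rs. Qed.

Lemma eq_near_int x y r : (forall i, x i = y i) -> near_int x r -> near_int y r.
Proof. by move=> exy [N HN]; exists N => i; rewrite -exy. Qed.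

Lemma near_intD x y r s :
  near_int x r -> near_int y s -> near_int (fun i => x i + y i) (r + s).
Proof.
move=> [N HN] [M HM]; exists (fun i => N i + M i) => i.
have -> : x i + y i - (N i + M i)%:~R = (x i - (N i)%:~R) + (y i - (M i)%:~R).
  by rewrite intrD; ring.
exact: le_trans (ler_normD _ _) (lerD (HN i) (HM i)).
Qed.

Lemma near_intMz (k : int) x r :
  near_int x r -> near_int (fun i => k%:~R * x i) (`|k|%:~R * r).
Proof.
move=> [N HN]; exists (fun i => k * N i) => i.
by rewrite intrM -mulrBr normrM -intr_norm ler_wpM2l.
Qed.

Lemma near_intMn (k : nat) x r :
  near_int x r -> near_int (fun i => k%:R * x i) (k%:R * r).
Proof. by move=> /(near_intMz k) near_k; exact: near_k. Qed.

Lemma near_int_norm x r : (forall i, `|x i| <= r) -> near_int x r.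
Proof. by move=> xr; exists (fun=> 0) => i; rewrite subr0. Qed.

Lemma near_int_int x (N : 'I_n -> int) : (forall i, x i = (N i)%:~R) -> near_int x 0.
Proof. by move=> xN; exists N => i; rewrite xN subrr normr0. Qed.

End NearInt.

Section Pigeonhole.
Variable R : archiRealFieldType.

Definition frac_part (x : R) : R := x - (Num.floor x)%:~R.

Lemma frac_part_ge0 x : 0 <= frac_part x.
Proof. by rewrite subr_ge0 floor_le. Qed.

Lemma frac_part_lt1 x : frac_part x < 1.
Proof. by rewrite ltrBlDr addrC -[1]/(1%:~R) -intrD floorD1_gt. Qed.

Definition frac_bucket (L : nat) (x : R) : 'I_L.+1 :=
  inord `|Num.floor (L.+1%:R * frac_part x)|%N.

Lemma frac_bucket_close L x y :
  frac_bucket L x = frac_bucket L y -> `|frac_part x - frac_part y| <= L.+1%:R^-1.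
Proof.
have L0 : 0 < L.+1%:R :> R by rewrite ltr0n.
have bucket z : let F := Num.floor (L.+1%:R * frac_part z) in
    [/\ 0 <= F, (`|F| < L.+1)%N & F%:~R <= L.+1%:R * frac_part z < F%:~R + 1].
  move=> F; have F0 : 0 <= F by rewrite floor_ge0 mulr_ge0 ?frac_part_ge0.
  split=> //; last by rewrite -[1]/(1%:~R) -intrD floor_itv.
  suff : F < L.+1%:Z by rewrite -(gez0_abs F0).
  by rewrite floor_lt_int -[X in _ < X]mulr1 ltr_pM2l // frac_part_lt1.
have [x0 xL /andP[x1 x2]] := bucket x; have [y0 yL /andP[y1 y2]] := bucket y.
move/(congr1 val); rewrite /= !inordK // => /(congr1 Posz).
rewrite !gez0_abs // => exy; rewrite exy in x1 x2.
rewrite -(ler_pM2l L0) mulrV ?unitfE ?gt_eqF //.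
rewrite -[X in X * _]gtr0_norm // -normrM mulrBr ler_norml; apply/andP; split; lra.
Qed.

Lemma pigeonhole_near_int n (L : nat) (p : nat -> 'I_n -> R) :
  exists k1 k2 : nat, (k1 < k2 <= L.+1 ^ n)%N /\
    near_int (fun i => p k2 i - p k1 i) L.+1%:R^-1.
Proof.
pose f (k : 'I_(L.+1 ^ n).+1) := [ffun i => frac_bucket L (p k i)].
have [k1 [k2 [fk12 k12]]] : exists k1 k2, f k1 = f k2 /\ k1 != k2.
  apply: contrapT => noncoll.
  have /leq_card : injective f.
    move=> k1 k2 fk12; apply: contrapT => k12.
    by apply: noncoll; exists k1, k2; split=> //; apply/eqP.
  by rewrite card_ffun !card_ord ltnn.
have near_diff (a b : 'I_(L.+1 ^ n).+1) : f a = f b ->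
    near_int (fun i => p b i - p a i) L.+1%:R^-1.
  move=> fab; exists (fun i => Num.floor (p b i) - Num.floor (p a i)) => i.
  move/(congr1 (fun g : {ffun _ -> _} => g i)): fab; rewrite !ffunE.
  move/frac_bucket_close; rewrite distrC /frac_part intrB.
  by congr (`|_| <= _); ring.
case: (ltngtP k1 k2) => [lt12|lt21|eq12].
- by exists k1, k2; rewrite lt12 -ltnS ltn_ord; split=> //; apply: near_diff.
- by exists k2, k1; rewrite lt21 -ltnS ltn_ord; split=> //; apply: near_diff.
- by move: k12; rewrite (val_inj eq12) eqxx.
Qed.

Lemma exists_inv_succ_le (eta : R) : 0 < eta -> exists L : nat, L.+1%:R^-1 <= eta.
Proof.
move=> eta0; exists (Num.bound eta^-1).
rewrite -[leRHS]invrK lef_pV2 ?posrE ?invr_gt0 ?ltr0n //.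
by rewrite ltW // (lt_le_trans (archi_boundP _)) ?ler_nat ?invr_ge0 ?ltW.
Qed.

Lemma dirichlet_large_multiplier n (al : 'I_n -> R) (X eta : R) : 0 < eta ->
  exists M : int, X <= `|M|%:~R /\ near_int (fun i => M%:~R * al i) eta.
Proof.
move=> eta0; have [L inv_eta] := exists_inv_succ_le eta0.
pose Q := Num.bound `|X|.
have X_lt_Q : `|X| < Q%:R := archi_boundP (normr_ge0 X).
clearbody Q.
have [k1 [k2 [/andP[k12 _] near12]]] :=
  pigeonhole_near_int L (fun k i => (k * Q)%:R * al i).
exists ((k2 - k1) * Q)%N%:Z; split.
  rewrite ger0_norm //; apply: le_trans (ler_norm X) (ltW (lt_le_trans X_lt_Q _)).
  by rewrite -[_%:~R]/(_%:R) ler_nat leq_pmull ?subn_gt0.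
apply: near_int_le inv_eta; apply: eq_near_int near12 => i.
by rewrite -[(Posz _)%:~R]/(_%:R) mulnBl natrB ?mulrBl // leq_mul2r (ltnW k12) orbT.
Qed.

End Pigeonhole.

Lemma mul_div_le_half (R : realFieldType) (x y rho : R) :
  0 <= x -> x <= y -> 0 < y -> 0 <= rho -> 2 * x * (rho / (4 * y)) <= rho / 2.
Proof.
move=> x0 xy y0 rho0.
have -> : 2 * x * (rho / (4 * y)) = rho / 2 * (x / y) by field; lra.
by rewrite ler_piMr ?divr_ge0 // ler_pdivrMr // mul1r.
Qed.

Lemma quarter_div_le (R : realFieldType) (rho y : R) :
  0 <= rho -> 1 <= y -> rho / (4 * y) <= rho / 4.
Proof.
move=> rho0 y1; rewrite ler_pdivrMr ?mulr_gt0 //; last lra.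
have -> : rho / 4 * (4 * y) = rho * y by field.
by rewrite ler_peMr.
Qed.

Section QuadraticKronecker.
Variables (R : archiRealFieldType) (n : nat) (al : 'I_n -> R).

Definition dense_multiples : Prop := forall (p : 'I_n -> R) (r : R), 0 < r ->
  exists k : int, near_int (fun i => k%:~R * al i - p i) r.

Definition good_step (w : 'I_n -> R) (rho : R) (S : nat) (M b : int) : Prop :=
  [/\ near_int (fun i => b%:~R * al i) rho,
      near_int (fun i => M%:~R * al i) rho &
      forall m : int, (`|m| <= S)%N ->
      near_int (fun i => ((m + b) ^+ 2)%:~R * al i - (m ^+ 2)%:~R * al i
                         - (b ^+ 2)%:~R * al i) rho /\
      near_int (fun i => ((m + b + M) ^+ 2)%:~R * al i - ((m + b) ^+ 2)%:~R * al i
                         - w i) rho].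

(* 2 M (step_shift w M) = frac_part (w - M^2 al) differs from w - M^2 al by an
   integer vector, so once b al ~ step_shift w M, adding M after b shifts the
   square by w. *)
Definition step_shift (w : 'I_n -> R) (M : int) (i : 'I_n) : R :=
  frac_part (w i - (M ^+ 2)%:~R * al i) / (2 * M%:~R).

Lemma step_M_gt0 (rho : R) (S : nat) (M : int) :
  0 < rho -> 2 * S.+1%:R <= rho * `|M|%:~R -> 0 < `|M|%:~R :> R.
Proof. move=> rho0 M_large; have s0 : 0 < S.+1%:R :> R by rewrite ltr0n. nra. Qed.

Lemma step_shift_le (w : 'I_n -> R) (M : int) i :
  `|step_shift w M i| <= (2 * `|M|%:~R)^-1.
Proof.
rewrite normrM normfV normrM normr_nat -intr_norm ler_piMl ?invr_ge0 //.
by rewrite ger0_norm ?frac_part_ge0 ?ltW ?frac_part_lt1.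
Qed.

Lemma near_square_increments (w : 'I_n -> R) (rho : R) (S : nat) (M b m : int) :
  0 < rho -> 2 * S.+1%:R <= rho * `|M|%:~R ->
  near_int (fun i => M%:~R * al i) (rho / (4 * S.+1%:R)) ->
  near_int (fun i => b%:~R * al i - step_shift w M i) (rho / (4 * (S.+1%:R + `|M|%:~R))) ->
  (`|m| <= S)%N ->
  near_int (fun i => ((m + b) ^+ 2)%:~R * al i - (m ^+ 2)%:~R * al i
                     - (b ^+ 2)%:~R * al i) rho /\
  near_int (fun i => ((m + b + M) ^+ 2)%:~R * al i - ((m + b) ^+ 2)%:~R * al i
                     - w i) rho.
Proof.
move=> rho0 M_large M_near b_near mS; have s0 : 0 < S.+1%:R :> R by rewrite ltr0n.
have nM0 := step_M_gt0 rho0 M_large; have sM0 : 0 < S.+1%:R + `|M|%:~R :> R by lra.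
have M0 : M%:~R != 0 :> R by rewrite -normr_gt0 -intr_norm.
set nm : R := `|m|%:~R; have nm0 : 0 <= nm by rewrite /nm -natr_absz.
have m_le : nm <= S.+1%:R by rewrite /nm -natr_absz ler_nat leqW.
have two_m : `|2 * m|%:~R = 2 * nm :> R.
  by rewrite intr_norm intrM normrM normr_nat -intr_norm.
have two_M : `|2 * M|%:~R = 2 * `|M|%:~R :> R.
  by rewrite intr_norm intrM normrM normr_nat -intr_norm.
split.
- have cross_small i : `|m%:~R * (2 * step_shift w M i)| <= rho / 2.
    rewrite normrM -intr_norm -/nm normrM normr_nat.
    apply: le_trans (ler_wpM2l nm0 (ler_wpM2l _ (step_shift_le w M i))) _ => //.
    have -> : nm * (2 * (2 * `|M|%:~R)^-1) = nm / `|M|%:~R by field; rewrite gt_eqF.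
    by rewrite ler_pdivrMr //; lra.
  apply: near_int_le (eq_near_int _ (near_intD (near_intMz (2 * m) b_near)
    (near_int_norm cross_small))) _.
    move=> i /=; rewrite /step_shift !rmorphXn /= !intrD intrM; field; exact: M0.
  have nm_le : nm <= S.+1%:R + `|M|%:~R by lra.
  by rewrite two_m; have := mul_div_le_half nm0 nm_le sM0 (ltW rho0); lra.
- have int_part : near_int (fun i => 2 * M%:~R * step_shift w M i
      + (M ^+ 2)%:~R * al i - w i) 0.
    apply: (@near_int_int _ _ _ (fun i => - Num.floor (w i - (M ^+ 2)%:~R * al i))).
    by move=> i; rewrite /step_shift /frac_part intrN; field.
  apply: near_int_le (eq_near_int _ (near_intD (near_intMz (2 * m) M_near)
      (near_intD (near_intMz (2 * M) b_near) int_part))) _.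
    move=> i /=; rewrite !rmorphXn /= !intrD !intrM; ring.
  have nM_le : `|M|%:~R <= S.+1%:R + `|M|%:~R :> R by lra.
  have hm := mul_div_le_half nm0 m_le s0 (ltW rho0).
  have hM := mul_div_le_half (ltW nM0) nM_le sM0 (ltW rho0).
  by rewrite two_m two_M addr0; apply: le_trans (lerD hm hM) _; lra.
Qed.

Lemma good_step_of_near (w : 'I_n -> R) (rho : R) (S : nat) (M b : int) :
  0 < rho -> 2 * S.+1%:R <= rho * `|M|%:~R ->
  near_int (fun i => M%:~R * al i) (rho / (4 * S.+1%:R)) ->
  near_int (fun i => b%:~R * al i - step_shift w M i) (rho / (4 * (S.+1%:R + `|M|%:~R))) ->
  good_step w rho S M b.
Proof.
move=> rho0 M_large M_near b_near; have s1 : 1 <= S.+1%:R :> R by rewrite ler1n.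
have nM0 := step_M_gt0 rho0 M_large.
have shift_small i : `|step_shift w M i| <= rho / 4.
  apply: le_trans (step_shift_le w M i) _.
  by rewrite -[leLHS]mul1r ler_pdivrMr ?mulr_gt0 //; lra.
have tolb_le : rho / (4 * (S.+1%:R + `|M|%:~R)) <= rho / 4.
  by apply: quarter_div_le; lra.
have tolM_le : rho / (4 * S.+1%:R) <= rho / 4 by apply: quarter_div_le; lra.
split=> [||m]; last exact: near_square_increments.
- apply: near_int_le (eq_near_int _ (near_intD b_near (near_int_norm shift_small))) _.
    by move=> i /=; rewrite subrK.
  lra.
- by apply: near_int_le M_near (le_trans tolM_le _); lra.
Qed.

Hypothesis al_dense : dense_multiples.

Lemma exists_good_step (w : 'I_n -> R) (rho : R) (S : nat) : 0 < rho ->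
  exists M b : int, good_step w rho S M b.
Proof.
move=> rho0; have s0 : 0 < S.+1%:R :> R by rewrite ltr0n.
have tolM0 : 0 < rho / (4 * S.+1%:R) by apply: divr_gt0 => //; lra.
have [M [M_large M_near]] := dirichlet_large_multiplier al (2 * S.+1%:R / rho) tolM0.
have {}M_large : 2 * S.+1%:R <= rho * `|M|%:~R.
  by have := ler_wpM2l (ltW rho0) M_large; rewrite mulrCA divff ?gt_eqF ?mulr1.
have tolb0 : 0 < rho / (4 * (S.+1%:R + `|M|%:~R)).
  by apply: divr_gt0 => //; have := step_M_gt0 rho0 M_large; lra.
have [b b_near] := al_dense (step_shift w M) tolb0.
by exists M, b; apply: good_step_of_near.
Qed.

Lemma good_steps_sum (w : 'I_n -> R) (rho : R) (a : int) (k1 : nat)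
    (M b : nat -> int) (S : nat -> nat) :
  (forall k, S k.+1 = S k + `|b k|)%N -> (`|a| <= S k1)%N ->
  (forall k, good_step w rho (S k) (M k) (b k)) ->
  forall d, let m := a + \sum_(k1 <= j < k1 + d) b j in
  [/\ (`|m| <= S (k1 + d))%N,
      near_int (fun i => m%:~R * al i - a%:~R * al i) (rho * d%:R) &
      near_int (fun i => (m ^+ 2)%:~R * al i - (a ^+ 2)%:~R * al i
                 - \sum_(k1 <= j < k1 + d) (b j ^+ 2)%:~R * al i) (rho * d%:R)].
Proof.
move=> S_next a_le steps; elim=> [|d IH] m.
  rewrite /m addn0 big_geq // addr0 mulr0; split=> //;
    by apply: near_int_norm => i; rewrite ?big_geq // !subrr ?subr0 normr0.
have [m_le m_near m_sq] := IH; set k := (k1 + d)%N in m_le m_near m_sq *.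
have [b_near _ step] := steps k; have [sq_near _] := step _ m_le.
have m_next : m = a + \sum_(k1 <= j < k) b j + b k.
  by rewrite /m addnS big_nat_recr ?leq_addr //= addrA.
rewrite m_next addnS -/k S_next -[(d.+1)%:R]natr1 mulrDr mulr1; split.
- by rewrite -lez_nat PoszD !abszE (le_trans (ler_normD _ _)) // lerD2r -abszE lez_nat.
- apply: eq_near_int (near_intD m_near b_near) => i.
  by rewrite intrD; ring.
- apply: eq_near_int (near_intD m_sq sq_near) => i.
  by rewrite big_nat_recr ?leq_addr //=; ring.
Qed.

Lemma good_steps_block (w : 'I_n -> R) (rho eta : R) (a : int) (k1 k2 : nat)
    (M b : nat -> int) (S : nat -> nat) :
  (forall k, S k.+1 = S k + `|b k|)%N -> (`|a| <= S k1)%N ->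
  (forall k, good_step w rho (S k) (M k) (b k)) -> (k1 < k2)%N ->
  near_int (fun i => \sum_(k1 <= j < k2) (b j ^+ 2)%:~R * al i) eta ->
  let m := a + \sum_(k1 <= j < k2) b j + M k2.-1 in
  near_int (fun i => m%:~R * al i - a%:~R * al i) (rho * (k2 - k1).+1%:R) /\
  near_int (fun i => (m ^+ 2)%:~R * al i - (a ^+ 2)%:~R * al i - w i)
    (rho * (k2 - k1).+1%:R + eta).
Proof.
move=> S_next a_le steps k12 block_near m.
have sums := good_steps_sum S_next a_le steps.
have [j k2E] : exists j, k2 = j.+1 by exists k2.-1; rewrite prednK // (leq_ltn_trans _ k12).
have k1j : (k1 <= j)%N by rewrite -ltnS -k2E.
have [mj_le _ _] := sums (j - k1)%N; have [_ mk_near mk_sq] := sums (k2 - k1)%N.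
rewrite subnKC // in mj_le; rewrite subnKC ?(ltnW k12) // in mk_near mk_sq.
set mj := a + _ in mj_le.
have [_ Mj_near /(_ _ mj_le) [_ last_sq]] := steps j.
have mkE : a + \sum_(k1 <= i < k2) b i = mj + b j.
  by rewrite k2E big_nat_recr //= addrA.
rewrite /m mkE k2E /= -k2E in mk_near mk_sq *.
rewrite -[(k2 - k1).+1%:R]natr1 mulrDr mulr1; split.
- apply: eq_near_int (near_intD mk_near Mj_near) => i.
  by rewrite !intrD; ring.
- apply: eq_near_int (near_intD (near_intD mk_sq last_sq) block_near) => i.
  ring.
Qed.

Theorem dense_multiples_square (u t : 'I_n -> R) (r : R) : 0 < r ->
  exists m : int, near_int (fun i => m%:~R * al i - u i) r /\
                  near_int (fun i => (m ^+ 2)%:~R * al i - t i) r.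
Proof.
move=> r0; have r2 : 0 < r / 2 by lra.
have [a a_near] := al_dense u r2.
have [L L_small] := exists_inv_succ_le r2.
pose K := (L.+1 ^ n)%N; have K0 : 0 <= K%:R :> R by [].
pose rho := r / (2 * (K%:R + 1)).
have rho0 : 0 < rho by apply: divr_gt0 => //; lra.
pose w i := t i - (a ^+ 2)%:~R * al i.
have /boolp.choice [f f_good] :
    forall S : nat, exists Mb : int * int, good_step w rho S Mb.1 Mb.2.
  by move=> S; have [M [b ?]] := exists_good_step w S rho0; exists (M, b).
pose S k := iter k (fun s => s + `|(f s).2|)%N `|a|%N.
pose b k := (f (S k)).2.
have a_le k : (`|a| <= S k)%N by elim: k => //= k IH; rewrite (leq_trans IH) ?leq_addr.
have [k1 [k2 [/andP[k12 k2K] sq_near]]] := pigeonhole_near_int L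
  (fun k i => \sum_(0 <= j < k) (b j ^+ 2)%:~R * al i).
have block_near : near_int (fun i => \sum_(k1 <= j < k2) (b j ^+ 2)%:~R * al i) L.+1%:R^-1.
  apply: eq_near_int sq_near => i.
  by rewrite (@big_cat_nat _ _ _ k1 0 k2) ?(ltnW k12) //=; ring.
have [m_near m_sq] := good_steps_block (M := fun k => (f (S k)).1) (fun k => erefl)
  (a_le k1) (fun k => f_good (S k)) k12 block_near.
have rho_le : rho * (k2 - k1).+1%:R <= r / 2.
  have -> : r / 2 = rho * (K%:R + 1) by rewrite /rho; field; lra.
  rewrite ler_pM2l // -natr1 lerD2r ler_nat.
  exact: leq_trans (leq_subr _ _) k2K.
exists (a + \sum_(k1 <= j < k2) b j + (f (S k2.-1)).1); split.
- apply: near_int_le (eq_near_int _ (near_intD m_near a_near)) _.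
    by move=> i /=; ring.
  lra.
- apply: near_int_le (eq_near_int _ m_sq) _; first by move=> i /=; rewrite /w; ring.
  by apply: le_trans (lerD rho_le L_small) _; lra.
Qed.

Lemma exists_nat_bound_scaled (r : R) : 0 < r ->
  exists c : nat, (0 < c)%N /\ forall i, `|al i| <= c%:R * r.
Proof.
move=> r0; pose c := (Num.bound ((\sum_j `|al j|) / r)).+1.
have c_gt : (\sum_j `|al j|) / r < c%:R.
  apply: lt_le_trans (archi_boundP _) _; last by rewrite ler_nat.
  by rewrite divr_ge0 ?sumr_ge0 ?ltW.
exists c; split=> // i; rewrite -ler_pdivrMr //.
apply: le_trans (ltW c_gt); rewrite ler_pM2r ?invr_gt0 //.
by rewrite (bigD1 i) //= lerDl sumr_ge0.
Qed.

Lemma dense_multiples_xy_sub_sq (r : R) (d : int) : 0 < r ->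
  exists x y z : int, [/\ near_int (fun i => x%:~R * al i) r,
    near_int (fun i => y%:~R * al i) r, near_int (fun i => z%:~R * al i) r &
    d = x * y - z ^+ 2].
Proof.
move=> r0; have r2 : 0 < r / 2 by lra.
have [c [c0 al_small]] := exists_nat_bound_scaled r2.
pose cR : R := c%:R; have cR1 : 1 <= cR by rewrite ler1n.
pose eps := r / (cR ^+ 2 + 2 * cR + 2).
have eps0 : 0 < eps by apply: divr_gt0 => //; nra.
have epsE : eps * (cR ^+ 2 + 2 * cR + 2) = r by rewrite /eps; field; nra.
have [a [a_lin a_sq]] := dense_multiples_square
  (fun i => - (al i / cR)) (fun i => al i / cR ^+ 2 - d%:~R * al i) eps0.
have cR0 : cR != 0 by rewrite gt_eqF //; lra.
have cE : (c%:Z)%:~R = cR by [].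
exists (1 + 2 * a * c%:Z + (a ^+ 2 + d) * c%:Z ^+ 2), (a ^+ 2 + d),
  (a + (a ^+ 2 + d) * c%:Z); split; last by ring.
- apply: near_int_le (eq_near_int _ (near_intD (near_intMn (2 * c) a_lin)
    (near_intMn (c ^ 2) a_sq))) _.
    move=> i /=; rewrite natrM natrX -/cR !(intrD, intrM, rmorphXn) cE /=.
    by field.
  rewrite natrM natrX -/cR; nra.
- have al_tiny i : `|al i / cR ^+ 2| <= r / 2.
    rewrite normrM normfV normrX (ger0_norm (ler0n _ c)) ler_pdivrMr ?exprn_gt0 ?ltr0n //.
    apply: le_trans (al_small i) _; rewrite -/cR mulrC; apply: ler_wpM2l; first lra.
    by rewrite expr2 ler_peMr //; lra.
  apply: near_int_le (eq_near_int _ (near_intD a_sq (near_int_norm al_tiny))) _.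
    by move=> i /=; rewrite !(intrD, intrM, rmorphXn) /=; ring.
  nra.
- apply: near_int_le (eq_near_int _ (near_intD a_lin (near_intMn c a_sq))) _.
    move=> i /=; rewrite -/cR !(intrD, intrM, rmorphXn) cE /=.
    by field.
  nra.
Qed.
End QuadraticKronecker.

Lemma ball_rowP n (p y : 'rV[RR]_n) (e : RR) : 0 < e ->
  ball p e y <-> forall i, `|p ord0 i - y ord0 i| < e.
Proof.
move=> e0; rewrite mx_norm_ball /ball_ /Num.Def.normr /= mx_normrE; split.
- move=> /bigmax_ltP[_ entries] i.
  by have := entries (ord0, i) isT; rewrite !mxE.
- move=> entries; apply/bigmax_ltP; split=> // -[a b] _ /=.
  by rewrite !mxE (ord1 a).
Qed.

Lemma lattice_vecD n (u v : 'rV[RR]_n) :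
  lattice_vec u -> lattice_vec v -> lattice_vec (u + v).
Proof. by move=> lu lv i; rewrite mxE rpredD. Qed.

Lemma lattice_vecN n (u : 'rV[RR]_n) : lattice_vec u -> lattice_vec (- u).
Proof. by move=> lu i; rewrite mxE rpredN. Qed.

Lemma torus_hom_mulz n (tau : int -> 'rV[RR]_n) : torus_hom tau ->
  forall k : int, lattice_vec (tau k - k%:~R *: tau 1).
Proof.
move=> hom.
have tau0 : lattice_vec (tau 0).
  by have := lattice_vecN (hom 0 0); rewrite addr0 opprB addrK.
have tau_nat (m : nat) : lattice_vec (tau m - m%:R *: tau 1).
  elim: m => [|m IH]; first by rewrite scale0r subr0.
  have := lattice_vecD (hom m 1) IH; rewrite -PoszD addn1.
  congr lattice_vec; apply/matrixP => a b; rewrite !mxE -[m.+1%:R]natr1; ring.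
case=> [m|m]; first exact: tau_nat.
have := lattice_vecD (lattice_vecD (lattice_vecN (hom (Negz m) m.+1)) tau0)
  (lattice_vecN (tau_nat m.+1)).
rewrite NegzE addNr; congr lattice_vec.
by apply/matrixP => a b; rewrite !mxE rmorphN /=; ring.
Qed.

Lemma torus_dense_image_dense_multiples n (tau : int -> 'rV[RR]_n) :
  torus_hom tau -> torus_dense_image tau -> dense_multiples (fun i => tau 1 ord0 i).
Proof.
move=> hom dense p r r0.
have : closure [set tau k + w | k in [set: int] & w in lattice_vec (n:=n)] (\row_i p i).
  by rewrite dense.
move=> /(_ _ (nbhsx_ballx (\row_i p i) r r0)) [_ [[k _ [w w_lat <-]] near_p]].
exists k; have k_lat := torus_hom_mulz hom k.
exists (fun i => - (Num.floor (w ord0 i) + Num.floor ((tau k - k%:~R *: tau 1) ord0 i))) => i.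
rewrite intrN intrD !floorK ?w_lat ?k_lat //.
move/ball_rowP: near_p => /(_ r0 i); rewrite !mxE distrC => /ltW.
by congr (`|_| <= _); ring.
Qed.

Lemma torus_open0_near_int n (tau : int -> 'rV[RR]_n) (U : set 'rV[RR]_n) :
  torus_hom tau -> torus_open U -> U 0 -> exists2 r : RR, 0 < r &
    forall k : int, near_int (fun i => k%:~R * tau 1 ord0 i) r -> U (tau k).
Proof.
move=> hom [U_inv U_open] U0.
have /nbhs_ballP [e e0 ball_U] : nbhs (0 : 'rV[RR]_n) U.
  by move: U_open; rewrite openE => /(_ _ U0).
exists (e / 2) => [|k [N near_N]]; first exact: divr_gt0.
pose v : 'rV[RR]_n := \row_i (k%:~R * tau 1 ord0 i - (N i)%:~R).
apply: (U_inv v).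
  move=> i; have := torus_hom_mulz hom k i; rewrite !mxE => k_lat.
  have -> : k%:~R * tau 1 ord0 i - (N i)%:~R - tau k ord0 i =
    - (tau k ord0 i - k%:~R * tau 1 ord0 i) - (N i)%:~R by ring.
  by rewrite rpredB ?rpredN ?intr_int.
apply: ball_U; apply/ball_rowP => // i; rewrite !mxE sub0r normrN.
by apply: le_lt_trans (near_N i) _; have := (midf_lt e0).2; rewrite add0r.
Qed.

Lemma bohr_zero_nonperiodic_near_int (B : set int) : bohr_zero_nonperiodic B ->
  exists n (al : 'I_n -> RR) (r : RR), [/\ dense_multiples al, 0 < r &
    forall k : int, near_int (fun i => k%:~R * al i) r -> B k].
Proof.
move=> [n [tau [U [_ [hom [dense [U_open [U0 ->]]]]]]]].
have [r r0 U_near] := torus_open0_near_int hom U_open U0.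
exists n, (fun i => tau 1 ord0 i), r; split=> //.
exact: torus_dense_image_dense_multiples.
Qed.

Theorem corollary1p2 (B : set int) :
  bohr_zero_nonperiodic B ->
  forall d : int, exists x y z : int,
    B x /\ B y /\ B z /\ d = x * y - z ^+ 2.
Proof.
move=> /bohr_zero_nonperiodic_near_int [n [al [r [al_dense r0 near_B]]]] d.
have [x [y [z [near_x near_y near_z ->]]]] := dense_multiples_xy_sub_sq al_dense d r0.
by exists x, y, z; do !split; apply: near_B.
Qed.
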